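(* For $n\ge2$ let $\sigma_1,\sigma_2,\dots$ be independent exponential random variables, $\sigma_i$ having rate $17\,i\sqrt{\log n}$. Then for all $\alpha<1$, all $\beta<\alpha$ and any $c_3>0$, for all $n$ large enough, $$\mathbf P\Big(\sum_{i=1}^{n^\alpha}\sigma_i<1\Big)\le e^{-c_3n^\beta}.$$
   Context: The upper summation limit $n^\alpha$ is understood as $\lfloor n^\alpha\rfloor$; $\alpha$ is positive. *)

From HB Require Import structures.
From mathcomp Require Import all_boot all_order all_algebra.
From mathcomp Require Import finmap.
From mathcomp Require Import all_classical all_reals all_analysis.
Set Implicit Arguments. Unset Strict Implicit. Unset Printing Implicit Defensive.
Import Order.TTheory GRing.Theory Num.Theory.
Local Open Scope classical_set_scope.
Local Open Scope ring_scope.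

Definition mutually_independent {d} {T : measurableType d} {R : realType}
    (P : probability T R) (X : nat -> {RV P >-> R}) : Prop :=
  forall (I : {fset nat}) (B : nat -> set R),
    (forall i, i \in I -> measurable (B i)) ->
    P (\bigcap_(i in [set` I]) (X i @^-1` B i)) =
    (\prod_(i <- I) P (X i @^-1` B i))%E.

Definition exponential_rv {d} {T : measurableType d} {R : realType}
    (P : probability T R) (X : {RV P >-> R}) (rate : R) : Prop :=
  forall A : set R, measurable A -> P (X @^-1` A) = exponential_prob rate A.

From HB Require Import structures.
From mathcomp Require Import all_boot all_order all_algebra.
From mathcomp Require Import finmap.
From mathcomp Require Import all_classical all_reals all_analysis.
From mathcomp Require Import measurable_realfun ring lra.
Import Order.TTheory GRing.Theory Num.Theory.
Import numFieldNormedType.Exports.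
Local Open Scope classical_set_scope.
Local Open Scope ring_scope.

(** The Chernoff bound
      P(sum_k sigma_k < 1) <= e^t E[e^(-t sum_k sigma_k)] = e^t prod_k lam_k / (lam_k + t)
                           <= exp (t - sum_k t / (lam_k + t))
    does the work.  Independence is only available on events, so instead of computing the
    expectation we round each sigma_k down to the grid (K+1)^-1 N, where it becomes
    geometric; Rankin's trick over the finitely many grid points gives the same bound up to
    a factor e as soon as sum_k (lam_k + t) <= K + 1.
    For lam_k = k r and t = r L we get sum_(k <= m) t / (lam_k + t) = sum_k L / (k + L)
    >= L log ((m + L + 1) / (L + 1)), which exceeds L (r + 1) when (L + 1) e^(r+1) <= m + L + 1,
    and then the bound is e^(1 - L).  With r = 17 sqrt (log n), m = n^alpha and
    L ~ c3 n^b for some b in [beta, alpha), this condition holds for large n because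
    e^(17 sqrt (log n)) = n^o(1). *)

Section ExponentialCells.
Context {R : realType}.
Implicit Types (lam a b : R) (K l : nat).

Lemma exponential_prob_lt0 lam : exponential_prob lam `]-oo, 0[ = 0%E.
Proof.
rewrite /exponential_prob integral0_eq // => x /=; rewrite in_itv /= => x0.
by rewrite lt0_exponential_pdf.
Qed.

Lemma exponential_prob_itv_cc lam a b : 0 <= a -> a < b ->
  exponential_prob lam `[a, b] = (expR (- lam * a) - expR (- lam * b))%:E.
Proof.
move=> a0 ab.
have cexp : continuous (fun z : R^o => expR (- lam * z)).
  move=> z; apply: continuous_comp; last exact: continuous_expR.
  by apply: continuousM => //; exact: cst_continuous.
rewrite /exponential_prob (@continuous_FTC2 _ _ (fun x => - expR (- lam * x))) //.
- by rewrite -EFinD opprK addrC.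
- apply: (@continuous_subspaceW R^o _ _ [set` `[0, +oo[%R]).
    by move=> x /=; rewrite !in_itv /= => /andP[ax _]; rewrite (le_trans a0 ax).
  exact: within_continuous_exponential_pdf.
- split.
  + by move=> z _; exact: ex_derive.
  + by apply/cvg_at_right_filter; apply: cvgN; exact: cexp.
  + by apply/cvg_at_left_filter; apply: cvgN; exact: cexp.
- move=> z; rewrite in_itv/= => /andP[az _].
  by apply: derive1_exponential_pdf; rewrite in_itv/= andbT (le_lt_trans a0 az).
Qed.

Lemma exponential_prob_itv_co lam a b : 0 <= a -> a < b ->
  exponential_prob lam `[a, b[ = (expR (- lam * a) - expR (- lam * b))%:E.
Proof.
move=> a0 ab; rewrite -exponential_prob_itv_cc // /exponential_prob.
rewrite integral_itv_bndo_bndc //.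
by apply/measurable_EFinP/measurable_funTS; exact: measurable_exponential_pdf.
Qed.

Definition grid_cell K l : set R := `[l%:R / K.+1%:R, l.+1%:R / K.+1%:R[.

Lemma exponential_prob_grid_cell lam K l :
  exponential_prob lam (grid_cell K l) =
  ((1 - expR (- (lam / K.+1%:R))) * expR (- (lam / K.+1%:R)) ^+ l)%:E.
Proof.
rewrite exponential_prob_itv_co ?divr_ge0 // ?ltr_pM2r ?invr_gt0 ?ltr_nat //.
rewrite -!expRM_natl; congr (_%:E).
by rewrite mulrBl mul1r -expRD; congr (expR _ - expR _); ring.
Qed.

Lemma grid_cell_truncn K x : 0 <= x -> grid_cell K (Num.truncn (K.+1%:R * x)) x.
Proof.
move=> x0; have K0 : (0 : R) < K.+1%:R by [].
have /andP[lo hi] := truncn_itv (mulr_ge0 (ltW K0) x0).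
by rewrite /grid_cell /= in_itv /= ler_pdivrMr // ltr_pdivlMr // ![x * _]mulrC lo.
Qed.

End ExponentialCells.

Section RealBounds.
Context {R : realType}.

Lemma geometric_sum_le (x : R) n : 0 <= x -> x < 1 ->
  \sum_(i < n) x ^+ i <= (1 - x)^-1.
Proof.
move=> x0 x1; have x1_gt0 : 0 < 1 - x by rewrite subr_gt0.
rewrite -(ler_pM2l x1_gt0) mulfV ?gt_eqF // -opprB mulNr -subrX1 opprB.
by rewrite lerBlDr lerDl exprn_ge0.
Qed.

(* Rankin's trick: [1 <= z ^+ (\sum_k j k) / z ^+ N] on the range of summation. *)
Lemma sum_ffun_sum_lt_rankin m N (F : 'I_m -> nat -> R) (z : R) :
  0 < z <= 1 -> (forall k l, 0 <= F k l) ->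
  \sum_(j : {ffun 'I_m -> 'I_N} | (\sum_(k < m) j k < N)%N) \prod_(k < m) F k (j k)
  <= (z ^+ N)^-1 * \prod_(k < m) \sum_(l < N) F k l * z ^+ l.
Proof.
move=> /andP[z0 z1] F0.
rewrite bigA_distr_bigA mulr_sumr.
rewrite [leRHS](bigID (fun j : {ffun 'I_m -> 'I_N} => (\sum_(k < m) j k < N)%N)) /=.
rewrite -[leLHS]addr0 lerD //; last first.
  apply: sumr_ge0 => j _; apply: mulr_ge0; first by rewrite invr_ge0 exprn_ge0 // ltW.
  by apply: prodr_ge0 => k _; rewrite mulr_ge0 // exprn_ge0 // ltW.
apply: ler_sum => j jN; rewrite big_split /= prodrXr mulrCA.
rewrite -[leLHS]mulr1 ler_wpM2l ?prodr_ge0 // mulrC ler_pdivlMr ?exprn_gt0 // mul1r.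
by apply: ler_wiXn2l; [exact: ltW | | exact: ltnW].
Qed.

Lemma expRN_ratio_le (u v : R) : 0 < u -> 0 <= v ->
  (1 - expR (- u)) / (1 - expR (- (u + v))) <= expR (u + v - v / (u + v)).
Proof.
move=> u0 v0; set w := u + v; have w0 : 0 < w by rewrite ltr_wpDr.
have num : 1 - expR (- u) <= u by have := expR_ge1Dx (- u); lra.
have den : w / (1 + w) <= 1 - expR (- w).
  have -> : w / (1 + w) = 1 - (1 + w)^-1 by field; lra.
  by rewrite lerD2l lerN2 expRN lef_pV2 ?posrE ?expR_gt0 ?expR_ge1Dx //; lra.
have den0 : 0 < w / (1 + w) by rewrite divr_gt0 //; lra.
apply: (@le_trans _ _ (u / (w / (1 + w)))).
  apply: ler_pM => //; first by rewrite subr_ge0 expR_le1 oppr_le0 ltW.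
    by rewrite invr_ge0 ltW // (lt_le_trans den0).
  by rewrite lef_pV2 ?posrE // (lt_le_trans den0).
have -> : u / (w / (1 + w)) = (1 - v / w) * (1 + w) by rewrite /w; field; lra.
have vw : v / w <= 1 by rewrite ler_pdivrMr // mul1r lerDr ltW.
by rewrite expRD mulrC; apply: ler_pM; rewrite ?expR_ge1Dx //; lra.
Qed.

Lemma geometric_gf_le (u v : R) N : 0 < u -> 0 <= v ->
  \sum_(l < N) (1 - expR (- u)) * expR (- u) ^+ l * expR (- v) ^+ l <=
  expR (u + v - v / (u + v)).
Proof.
move=> u0 v0; have uv0 : 0 < u + v by rewrite ltr_wpDr.
have Euv : expR (- u) * expR (- v) = expR (- (u + v)) by rewrite -expRD opprD.
under eq_bigr do rewrite -mulrA -exprMn Euv.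
rewrite -mulr_sumr; apply: le_trans (expRN_ratio_le _ _ u0 v0).
apply: ler_wpM2l; first by rewrite subr_ge0 expR_le1 oppr_le0 ltW.
by apply: geometric_sum_le; rewrite ?expR_ge0 // expR_lt1 oppr_lt0.
Qed.
End RealBounds.

Lemma mutually_independent_ord {d} {T : measurableType d} {R : realType}
    {P : probability T R} {X : nat -> {RV P >-> R}} m (B : 'I_m -> set R) :
  mutually_independent X -> (forall k, measurable (B k)) ->
  P (\bigcap_(k in [set: 'I_m]) X k @^-1` B k) =
  (\prod_(k < m) P (X k @^-1` B k))%E.
Proof.
move=> indep mB.
pose B' i := if insub i is Some k then B k else setT.
have -> : \bigcap_(k in [set: 'I_m]) X k @^-1` B k =
          \bigcap_(i in [set` fset_set `I_m]) X i @^-1` B' i.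
  rewrite fset_setK; last exact: finite_II.
  apply/seteqP; split=> w Bw i.
    by move=> im; rewrite /B' insubT; exact: Bw.
  by move=> _; have := Bw _ (ltn_ord i); rewrite /B' valK.
rewrite indep; last by move=> i _; rewrite /B'; case: insub.
rewrite -fsbig_finite ?finite_II // -fsbig_ord.
by apply: eq_bigr => k _; rewrite /B' valK.
Qed.

Lemma sum_lt1_grid_cells {R : realType} m K (x : 'I_m -> R) :
  (forall k, 0 <= x k) -> \sum_(k < m) x k < 1 ->
  exists2 j : {ffun 'I_m -> 'I_K.+1},
    (\sum_(k < m) j k < K.+1)%N & forall k, grid_cell K (j k) (x k).
Proof.
move=> x0 x_lt1; have K0 : (0 : R) < K.+1%:R by [].
pose j := [ffun k => inord (Num.truncn (K.+1%:R * x k)) : 'I_K.+1].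
have jE k : j k = Num.truncn (K.+1%:R * x k) :> nat.
  rewrite ffunE inordK // ltnS truncn_le_nat -[ltRHS]mulr1 ltr_pM2l //.
  by apply: le_lt_trans x_lt1; rewrite (bigD1 k) //= lerDl sumr_ge0.
exists j => [|k]; last by rewrite jE; exact: grid_cell_truncn.
rewrite -(ltr_nat R) natr_sum (le_lt_trans (y := \sum_(k < m) K.+1%:R * x k)) //.
  apply: ler_sum => k _; rewrite jE.
  by have /andP[] := truncn_itv (mulr_ge0 (ltW K0) (x0 k)).
by rewrite -mulr_sumr -[ltRHS]mulr1 ltr_pM2l.
Qed.

Section Discretization.
Context {d} {T : measurableType d} {R : realType} {P : probability T R}
  {X : nat -> {RV P >-> R}} {lam : nat -> R}.
Hypotheses (X_indep : mutually_independent X)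
  (X_exp : forall k, exponential_rv (X k) (lam k)) (lam_gt0 : forall k, 0 < lam k).

Let q K k := expR (- (lam k / K.+1%:R)).

Lemma prob_some_lt0 m : P (\big[setU/set0]_(k < m) X k @^-1` `]-oo, 0[) = 0%E.
Proof.
apply/eqP; rewrite -measure_le0.
have mX k : measurable (X k @^-1` `]-oo, 0[).
  by apply: measurable_funPTI; exact: measurable_itv.
apply: le_trans (Boole_inequality P (fun k _ => mX k)) _.
rewrite big1 // => k _ /=.
by rewrite X_exp ?exponential_prob_lt0 //; exact: measurable_itv.
Qed.

Lemma prob_grid_cells m K (j : {ffun 'I_m -> 'I_K.+1}) :
  P (\bigcap_(k in [set: 'I_m]) X k @^-1` grid_cell K (j k)) =
  (\prod_(k < m) ((1 - q K k) * q K k ^+ j k))%:E.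
Proof.
rewrite mutually_independent_ord //; last by move=> k; exact: measurable_itv.
rewrite -prodEFin (eq_bigr _ (fun (k : 'I_m) _ => X_exp k _ (measurable_itv _))).
by under eq_bigr do rewrite exponential_prob_grid_cell.
Qed.

Lemma prob_sum_lt1_le_grid m K :
  (P [set w | (\sum_(k < m) X k w < 1)%R] <=
   (\sum_(j : {ffun 'I_m -> 'I_K.+1} | (\sum_(k < m) j k < K.+1)%N)
      \prod_(k < m) ((1 - q K k) * q K k ^+ j k))%R%:E)%E.
Proof.
set S := [set w | _].
pose Neg := \big[setU/set0]_(k < m) X k @^-1` `]-oo, 0[.
pose E (j : {ffun 'I_m -> 'I_K.+1}) :=
  \bigcap_(k in [set: 'I_m]) X k @^-1` grid_cell K (j k).
pose D := [set` fun j : {ffun 'I_m -> 'I_K.+1} => (\sum_(k < m) j k < K.+1)%N].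
have mNeg : measurable Neg.
  by apply: bigsetU_measurable => k _; apply: measurable_funPTI; exact: measurable_itv.
have mE j : measurable (E j).
  apply: fin_bigcap_measurable => // k _.
  by apply: measurable_funPTI; exact: measurable_itv.
have mU : measurable (\bigcup_(j in D) E j) by apply: fin_bigcup_measurable.
have mS : measurable S.
  rewrite -[X in measurable X]setTI.
  have -> : S = (fun w => \sum_(k < m) X k w) @^-1` `]-oo, 1[.
    by apply/seteqP; split => w /=; rewrite in_itv.
  by apply: measurable_sum.
have cover : S `<=` \bigcup_(j in D) E j `|` Neg.
  move=> w Sw; case: (pselect (exists k : 'I_m, X k w < 0)) => [[k Xk_lt0]|Xw_ge0].
    right; rewrite /Neg -(bigcup_mkord m (fun k => X k @^-1` `]-oo, 0[)).
    by exists k => //=; rewrite in_itv.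
  have Xw0 (k : 'I_m) : 0 <= X k w.
    by rewrite leNgt; apply/negP => ?; apply: Xw_ge0; exists k.
  have [j Dj Xwj] := sum_lt1_grid_cells _ K _ Xw0 Sw.
  by left; exists j => // k _; exact: Xwj.
apply: (@le_trans _ _ (P (\bigcup_(j in D) E j))).
  rewrite -(measureU0 mU mNeg (prob_some_lt0 m)).
  by apply: (le_measure P _ _ cover); rewrite inE //; exact: measurableU.
apply: le_trans (content_sub_fsum _ finite_finset (fun j _ => mE j) mU (@subset_refl _ _)) _.
rewrite -(bigfs _ (index_enum_uniq _)); last by move=> j _; rewrite mem_index_enum.
rewrite -sumEFin; apply: lee_sum => j _.
by rewrite -[X in (X <= _)%E]/(P (E j)) prob_grid_cells.
Qed.

Lemma prob_sum_lt1_le_expR m t : 0 <= t ->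
  (P [set w | (\sum_(k < m) X k w < 1)%R] <=
   (expR (t + 1 - \sum_(k < m) t / (lam k + t)))%:E)%E.
Proof.
move=> t0; pose K := Num.truncn (\sum_(k < m) (lam k + t)).
have N0 : (0 : R) < K.+1%:R by [].
have sum_le : \sum_(k < m) (lam k + t) <= K.+1%:R by exact/ltW/truncnS_gt.
pose u k := lam k / K.+1%:R; pose v := t / K.+1%:R.
have u0 k : 0 < u k by rewrite divr_gt0.
have v0 : 0 <= v by rewrite /v divr_ge0.
apply: le_trans (prob_sum_lt1_le_grid m K) _; rewrite lee_fin.
have z01 : 0 < expR (- v) <= 1 by rewrite expR_gt0 expR_le1 oppr_le0.
have F0 (k : 'I_m) l : 0 <= (1 - q K k) * q K k ^+ l.
  rewrite /q mulr_ge0 ?exprn_ge0 ?expR_ge0 // subr_ge0 expR_le1 oppr_le0.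
  exact: ltW (u0 k).
apply: le_trans (sum_ffun_sum_lt_rankin _ _ _ _ z01 F0) _.
have -> : (expR (- v) ^+ K.+1)^-1 = expR t.
  by rewrite -expRM_natl -expRN mulrN opprK /v mulrC divfK ?gt_eqF.
apply: (@le_trans _ _ (expR t * \prod_(k < m) expR (u k + v - v / (u k + v)))).
  apply: ler_wpM2l; first exact: expR_ge0.
  apply: ler_prod => k _; rewrite sumr_ge0 => [|l _]; last first.
    by rewrite mulr_ge0 ?F0 ?exprn_ge0 ?expR_ge0.
  exact: geometric_gf_le _ _ K.+1 (u0 k) v0.
rewrite -expR_sum -expRD ler_expR big_split /= sumrN.
have -> : \sum_(k < m) (u k + v) = (\sum_(k < m) (lam k + t)) / K.+1%:R.
  by rewrite mulr_suml; apply: eq_bigr => k _; rewrite mulrDl.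
have -> : \sum_(k < m) v / (u k + v) = \sum_(k < m) t / (lam k + t).
  by apply: eq_bigr => k _; rewrite /u /v -mulrDl invf_div mulrA mulfVK ?gt_eqF.
by rewrite addrA lerD2r lerD2l ler_pdivrMr // mul1r.
Qed.
End Discretization.

Section Harmonic.
Context {R : realType}.

Lemma ln_addr1_sub_le (x : R) : 0 < x -> ln (x + 1) - ln x <= x^-1.
Proof.
move=> x0; have -> : x + 1 = x * (1 + x^-1) by rewrite mulrDr mulr1 mulfV ?gt_eqF.
have x1_gt0 : 0 < 1 + x^-1 by rewrite ltr_wpDr // invr_ge0 ltW.
rewrite lnM ?posrE // addrAC subrr add0r; apply: le_ln1Dx.
by apply: (@lt_trans _ _ 0); rewrite ?ltrN10 ?invr_gt0.
Qed.

Lemma sum_div_addr_ge (L a : R) m : 0 < L ->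
  (L + 1) * expR a <= m%:R + L + 1 -> L * a <= \sum_(k < m) L / (k.+1%:R + L).
Proof.
move=> L0 hm; have L1 : 0 < L + 1 by rewrite addr_gt0.
have a_le : a <= ln (m%:R + L + 1) - ln (L + 1).
  have L1a : 0 < (L + 1) * expR a by rewrite mulr_gt0 ?expR_gt0.
  rewrite lerBrDl -[a]expRK -lnM ?posrE ?expR_gt0 // ler_ln ?posrE //.
  exact: lt_le_trans hm.
apply: le_trans (ler_wpM2l (ltW L0) a_le) _.
pose f i := ln (i%:R + L + 1).
have -> : ln (m%:R + L + 1) - ln (L + 1) = f m - f 0%N by rewrite /f add0r.
rewrite -(telescope_sumr _ (leq0n m)) big_mkord mulr_sumr; apply: ler_sum => k _.
have kL : 0 < k%:R + L + 1 by rewrite ltr_wpDl // addr_ge0 // ltW.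
rewrite ler_pM2l // /f -natr1 [_ + 1 + L]addrAC.
exact: ln_addr1_sub_le.
Qed.

End Harmonic.

Lemma prob_sum_lt1_le_linear_rates {d} {T : measurableType d} {R : realType}
    {P : probability T R} {X : nat -> {RV P >-> R}} (r L : R) m :
  mutually_independent X -> (forall k, exponential_rv (X k) (k.+1%:R * r)) ->
  0 < r -> 0 < L -> (L + 1) * expR (r + 1) <= m%:R + L + 1 ->
  (P [set w | (\sum_(k < m) X k w < 1)%R] <= (expR (1 - L))%:E)%E.
Proof.
move=> X_indep X_exp r0 L0 hm.
have rates_gt0 k : 0 < k.+1%:R * r by rewrite mulr_gt0.
have t_ge0 : 0 <= r * L by rewrite mulr_ge0 // ltW.
apply: le_trans (prob_sum_lt1_le_expR X_indep X_exp rates_gt0 m _ t_ge0) _.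
rewrite lee_fin ler_expR.
have -> : \sum_(k < m) r * L / (k.+1%:R * r + r * L) = \sum_(k < m) L / (k.+1%:R + L).
  by apply: eq_bigr => k _; rewrite [_ * r]mulrC -mulrDr -mulf_div divff ?mul1r ?gt_eqF.
have := sum_div_addr_ge _ _ _ L0 hm; lra.
Qed.

Lemma expR_sqrt_ln_le_powR {R : realType} (C a e : R) : 0 < C -> 0 < e ->
  exists N : nat, forall n : nat, (N <= n)%N ->
    C * expR (a * Num.sqrt (ln (n%:R : R))) <= n%:R `^ e.
Proof.
move=> C0 e0; pose x0 := Num.max 1 ((`|a| + `|ln C|) / e).
exists (Num.truncn (expR (x0 ^+ 2))).+1 => n Nn.
have n_gt : expR (x0 ^+ 2) < n%:R.
  by apply: lt_le_trans (truncnS_gt _) _; rewrite ler_nat.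
have n0 : 0 < n%:R :> R by apply: lt_trans n_gt; exact: expR_gt0.
have x0_ge1 : 1 <= x0 by rewrite le_max lexx.
have x0_ge : `|a| + `|ln C| <= e * x0.
  by rewrite mulrC -ler_pdivrMr // le_max lexx orbT.
have ln_gt : x0 ^+ 2 < ln n%:R by rewrite -ltr_expR lnK ?posrE.
set s := Num.sqrt (ln n%:R).
have s2 : s ^+ 2 = ln n%:R.
  by rewrite sqr_sqrtr // ltW // (le_lt_trans _ ln_gt) // sqr_ge0.
have s_ge : x0 <= s.
  by rewrite -ler_sqr ?nnegrE ?sqrtr_ge0 ?(le_trans ler01) // s2 ltW.
have s_ge1 : 1 <= s := le_trans x0_ge1 s_ge.
have s0 : 0 <= s := le_trans ler01 s_ge1.
rewrite -[C]lnK ?posrE // -expRD /powR gt_eqF // ler_expR -s2.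
have : ln C + a * s <= (`|a| + `|ln C|) * s.
  have := ler_norm a; have := ler_norm (ln C); have := normr_ge0 (ln C); nra.
have : (`|a| + `|ln C|) * s <= e * x0 * s by rewrite ler_wpM2r.
have : e * x0 * s <= e * s ^+ 2 by rewrite expr2 mulrA ler_wpM2r // ler_wpM2l // ltW.
lra.
Qed.

Lemma prob_sum_lt1_le_powR {d} {T : measurableType d} {R : realType}
    {P : probability T R} {X : nat -> {RV P >-> R}} (n : nat) (alpha b c r : R) :
  mutually_independent X -> (forall k, exponential_rv (X k) (k.+1%:R * r)) ->
  (0 < n)%N -> 0 < r -> 0 < b -> 0 < c ->
  (c + 3) * expR (r + 1) <= n%:R `^ (alpha - b) ->
  (P [set w | (\sum_(k < Num.truncn (n%:R `^ alpha)) X k w < 1)%R] <=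
   (expR (- c * n%:R `^ b))%:E)%E.
Proof.
move=> X_indep X_exp n0 r0 b0 c0 hn.
have nb_ge1 : 1 <= n%:R `^ b.
  by rewrite -[leLHS](powRr0 n%:R); apply: ler_powR; rewrite ?ler1n // ltW.
pose L := (Num.truncn (c * n%:R `^ b)).+2.
have L_ge : c * n%:R `^ b + 1 <= L%:R by rewrite -natr1 lerD2r ltW // truncnS_gt.
have L_le : L%:R + 1 <= (c + 3) * n%:R `^ b.
  have := truncn_le (c * n%:R `^ b); rewrite /L -!natr1 => ?; nra.
pose m := Num.truncn (n%:R `^ alpha : R).
have m_ge : n%:R `^ alpha <= m%:R + 1 by rewrite natr1 ltW // truncnS_gt.
have key : (L%:R + 1) * expR (r + 1) <= m%:R + L%:R + 1.
  apply: le_trans (ler_wpM2r (expR_ge0 _) L_le) _.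
  rewrite -mulrA mulrCA; apply: le_trans (ler_wpM2l (powR_ge0 _ _) hn) _.
  rewrite -powRD; last by apply/implyP => _; rewrite pnatr_eq0 -lt0n.
  by rewrite addrC subrK (le_trans m_ge) // lerD2r lerDl.
apply: le_trans (prob_sum_lt1_le_linear_rates _ _ _ X_indep X_exp r0 _ key) _ => //.
by rewrite lee_fin ler_expR; lra.
Qed.

Theorem mainTheorem8 (R : realType) (alpha beta c3 : R) :
  0 < alpha -> alpha < 1 -> beta < alpha -> 0 < c3 ->
  exists N : nat, forall n : nat, (N <= n)%N -> (2 <= n)%N ->
    forall (d : measure_display) (T : measurableType d) (P : probability T R)
           (sigma : nat -> {RV P >-> R}),
      mutually_independent sigma ->
      (forall k : nat, exponential_rv (sigma k)
                         (17 * k.+1%:R * Num.sqrt (ln (n%:R : R)))) ->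
      (P [set t | (\sum_(k < Num.truncn ((n%:R : R) `^ alpha)) sigma k t < 1)%R]
         <= (expR (- c3 * (n%:R : R) `^ beta))%:E)%E.
Proof.
move=> alpha_gt0 _ beta_lt_alpha c3_gt0.
pose b := Num.max beta (alpha / 2).
have b_gt0 : 0 < b by rewrite lt_max divr_gt0 ?orbT.
have b_lt_alpha : b < alpha by rewrite gt_max beta_lt_alpha ltr_pdivrMr // ltr_pMr ?ltr1n.
have C_gt0 : 0 < (c3 + 3) * expR 1 by rewrite mulr_gt0 ?expR_gt0 ?addr_gt0.
have e_gt0 : 0 < alpha - b by rewrite subr_gt0.
have [N HN] := expR_sqrt_ln_le_powR _ 17 _ C_gt0 e_gt0.
exists N => n Nn n2 d T P sigma sigma_indep sigma_exp.
have r_gt0 : 0 < 17 * Num.sqrt (ln (n%:R : R)).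
  by rewrite mulr_gt0 // sqrtr_gt0 ln_gt0 // ltr1n.
apply: le_trans (prob_sum_lt1_le_powR n alpha b c3 _ sigma_indep _ _ r_gt0 b_gt0 c3_gt0 _) _.
- by move=> k; rewrite mulrA [_ * 17]mulrC; exact: sigma_exp.
- exact: ltnW n2.
- by rewrite expRD mulrCA mulrC; exact: HN.
rewrite lee_fin ler_expR !mulNr lerN2; apply: ler_wpM2l; first exact: ltW.
by apply: ler_powR; [rewrite ler1n ltnW | rewrite le_max lexx].
Qed.
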